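(* Let $\mathbf{X}_z\in\{0,1\}^{M_z\times N}$, $\mathbf{X}_p\in\{0,1\}^{M_p\times N}$, $1\le L\le N$, $0<\epsilon_0<1$, and let $(\underline{z},\underline{\mu},\underline{\lambda}_1,\underline{\lambda}_2,\nu)$ satisfy the KKT conditions described in the context. If $\underline{\lambda}_2(i)>0$ for some $i\in[N]$, then $\underline{\mu}^T\mathbf{X}_p(:,i)=0$.
   Context: $\underline{1}_n,\underline{0}_n$ denote all-ones/all-zeros vectors, $\preccurlyeq$ componentwise inequality, $\circ$ componentwise product, $\mathbf{X}_p(:,i)$ the $i$-th column of $\mathbf{X}_p$. Consider the linear program: minimize $\underline{1}_{M_z}^T\mathbf{X}_z\underline{z}$ over $\underline{z}\in\mathbb{R}^N$ subject to $\mathbf{X}_p\underline{z}\succcurlyeq(1-\epsilon_0)\underline{1}_{M_p}$, $\underline{0}_N\preccurlyeq\underline{z}\preccurlyeq\underline{1}_N$, $\underline{1}_N^T\underline{z}\ge N-L$. With dual variables $\underline{\mu}\in\mathbb{R}^{M_p}$, $\underline{\lambda}_1,\underline{\lambda}_2\in\mathbb{R}^N$, $\nu\in\mathbb{R}$, its KKT conditions are: $\underline{1}_{M_z}^T\mathbf{X}_z-\underline{\mu}^T\mathbf{X}_p-\underline{\lambda}_1^T+\underline{\lambda}_2^T-\nu\underline{1}_N^T=\underline{0}_N^T$; $\underline{\mu}\circ(\mathbf{X}_p\underline{z}-(1-\epsilon_0)\underline{1}_{M_p})=\underline{0}_{M_p}$, $\underline{\lambda}_1\circ\underline{z}=\underline{0}_N$,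 $\underline{\lambda}_2\circ(\underline{z}-\underline{1}_N)=\underline{0}_N$, $\nu(\underline{1}_N^T\underline{z}-(N-L))=0$; $\underline{0}_N\preccurlyeq\underline{z}\preccurlyeq\underline{1}_N$, $\underline{1}_N^T\underline{z}\ge N-L$, $\underline{\mu}\succcurlyeq\underline{0}_{M_p}$, $\underline{\lambda}_1\succcurlyeq\underline{0}_N$, $\underline{\lambda}_2\succcurlyeq\underline{0}_N$, $\nu\ge0$. *)

From mathcomp Require Import all_boot all_order all_algebra.
Set Implicit Arguments. Unset Strict Implicit. Unset Printing Implicit Defensive.
Import Order.TTheory GRing.Theory Num.Theory.
Local Open Scope ring_scope.

Definition binary_mx (R : pzRingType) (m n : nat) (A : 'M[R]_(m, n)) : Prop :=
  forall i j, A i j = 0 \/ A i j = 1.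

(* KKT conditions of the LP
     min 1^T Xz z  s.t.  Xp z >= (1-eps0) 1,  0 <= z <= 1,  1^T z >= N - L
   with duals mu (for Xp z >= ...), lam1 (z >= 0), lam2 (z <= 1), nu (sum). *)
Definition KKT (R : realFieldType) (Mz Mp N L : nat)
    (Xz : 'M[R]_(Mz, N)) (Xp : 'M[R]_(Mp, N)) (eps0 : R)
    (z : 'cV[R]_N) (mu : 'cV[R]_Mp) (lam1 lam2 : 'cV[R]_N) (nu : R) : Prop :=
  ((const_mx 1 : 'rV[R]_Mz) *m Xz - mu^T *m Xp - lam1^T + lam2^T
      - nu *: (const_mx 1 : 'rV[R]_N) = 0) /\
  (forall k, mu k 0 * ((Xp *m z) k 0 - (1 - eps0)) = 0) /\
  (forall i, lam1 i 0 * z i 0 = 0) /\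
  (forall i, lam2 i 0 * (z i 0 - 1) = 0) /\
  (nu * (\sum_i z i 0 - (N - L)%:R) = 0) /\
  (forall i, 0 <= z i 0 <= 1) /\
  (forall k, 1 - eps0 <= (Xp *m z) k 0) /\
  ((N - L)%:R <= \sum_i z i 0) /\
  (forall k, 0 <= mu k 0) /\ (forall i, 0 <= lam1 i 0) /\
  (forall i, 0 <= lam2 i 0) /\ 0 <= nu.

From mathcomp Require Import all_boot all_order all_algebra.
From mathcomp Require Import lra.
Import Order.TTheory GRing.Theory Num.Theory.
Local Open Scope ring_scope.

(** If [lam2 i > 0] then [z i = 1], so every row [k] of [Xp] with [Xp k i = 1]
    has [(Xp z) k >= 1 > 1 - eps0]: that constraint is slack and complementary
    slackness forces [mu k = 0]. *)

Lemma eq0_of_mul_eq0_pos_l {R : numDomainType} {a b : R} : 0 < a -> a * b = 0 -> b = 0.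
Proof. by move=> a_gt0 /eqP; rewrite mulf_eq0 gt_eqF //= => /eqP. Qed.

Lemma binary_mx_ge0 {R : numDomainType} {m n} {A : 'M[R]_(m, n)} :
  binary_mx A -> forall i j, 0 <= A i j.
Proof. by move=> A01 i j; case: (A01 i j) => ->. Qed.

Lemma mulmx_col_ge_entry {R : numDomainType} {m n} {A : 'M[R]_(m, n)}
    {v : 'cV[R]_n} {k} i :
  (forall j, 0 <= A k j) -> (forall j, 0 <= v j 0) ->
  A k i * v i 0 <= (A *m v) k 0.
Proof.
move=> A_ge0 v_ge0; rewrite mxE (bigD1 i) //= lerDl.
by apply: sumr_ge0 => j _; apply: mulr_ge0.
Qed.

Lemma slack_row_dual_eq0 {R : realFieldType} {m n} {A : 'M[R]_(m, n)}
    {v : 'cV[R]_n} {mu : 'cV[R]_m} {b : R} {k} :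
  mu k 0 * ((A *m v) k 0 - b) = 0 -> b < (A *m v) k 0 -> mu k 0 = 0.
Proof.
move=> /eqP; rewrite mulf_eq0 subr_eq0 => /orP[/eqP -> // | /eqP ->].
by rewrite ltxx.
Qed.

Theorem proposition5 (R : realFieldType) (Mz Mp N L : nat)
    (Xz : 'M[R]_(Mz, N)) (Xp : 'M[R]_(Mp, N)) (eps0 : R)
    (z : 'cV[R]_N) (mu : 'cV[R]_Mp) (lam1 lam2 : 'cV[R]_N) (nu : R) :
  binary_mx Xz -> binary_mx Xp ->
  (1 <= L <= N)%N -> 0 < eps0 < 1 ->
  KKT L Xz Xp eps0 z mu lam1 lam2 nu ->
  forall i : 'I_N, 0 < lam2 i 0 -> mu^T *m col i Xp = 0.
Proof.
move=> _ Xp01 _ /andP[eps0_gt0 _]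
  [_ [mu_slack [_ [lam2_slack [_ [z01 _]]]]]] i lam2i_gt0.
have zi1 : z i 0 = 1.
  by apply/eqP; rewrite -subr_eq0 (eq0_of_mul_eq0_pos_l lam2i_gt0 (lam2_slack i)).
have z_ge0 j : 0 <= z j 0 by case/andP: (z01 j).
apply/matrixP => a b; rewrite !mxE (ord1 a); apply: big1 => k _; rewrite !mxE.
case: (Xp01 k i) => [-> | Xpki]; first by rewrite mulr0.
suff -> : mu k 0 = 0 by rewrite mul0r.
apply: (slack_row_dual_eq0 (mu_slack k)).
have := mulmx_col_ge_entry i (binary_mx_ge0 Xp01 k) z_ge0.
rewrite Xpki zi1 mulr1; lra.
Qed.
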